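(* Assume $M_h=\mathbb{P}_1$ (so $\Phi_h=M_h$). Then any solution $(\phi^{n+1},\mu^{n+1})\in\Phi_h\times M_h$ of the J$_\varepsilon$-scheme satisfies $$\delta_t\Big(\int_\Omega I_h(J_\varepsilon(\phi^{n+1}))\,d\boldsymbol x\Big)\le\int_\Omega M^J_\varepsilon(\phi^{n+1})|\nabla\mu^{n+1}|^2\,d\boldsymbol x+\int_\Omega|\nabla\phi^{n+1}|^2\,d\boldsymbol x,$$ where $M^J_\varepsilon(\phi^{n+1})|\nabla\mu^{n+1}|^2$ means $(M^J_\varepsilon(\phi^{n+1})\nabla\mu^{n+1})\cdot\nabla\mu^{n+1}$. Moreover, $$\int_\Omega I_h(J_\varepsilon(\phi^{n+1}))\,d\boldsymbol x\le C_1+C_2\,T,$$ where $C_1,C_2$ depend on the initial energy $E(\phi^0)$ and on $\int_\Omega I_h(J_\varepsilon(\phi^0))\,d\boldsymbol x$.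
   Context: $\Omega\subset\mathbb{R}^d$ ($d=1,2,3$) bounded, $\eta>0$, $\varepsilon\in(0,1/2)$. $F(\phi)=\frac1{4\eta^2}\phi^2(\phi-1)^2=F_c+F_e$ with $F_c(\phi)=\frac1{4\eta^2}(\phi^4-2\phi^3+\frac32\phi^2)$, $F_e(\phi)=-\frac1{8\eta^2}\phi^2$; $E(\phi)=\int_\Omega(\frac12|\nabla\phi|^2+F(\phi))d\boldsymbol x$. The interval $[0,T]$ is split into $N$ steps, $\Delta t=T/N$, $\delta_tf^{n+1}=(f^{n+1}-f^n)/\Delta t$, $n=0,\dots,N-1$. $\mathcal T_h$ is a structured triangulation of $\Omega$ in which every element $I$ has vertices $\boldsymbol x_0,\dots,\boldsymbol x_d$ with $\boldsymbol x_k-\boldsymbol x_0$ parallel to the $k$-th coordinate axis. $\Phi_h$ is the space of continuous piecewise $\mathbb{P}_1$ functions, $M_h$ the space of continuous piecewise $\mathbb{P}_k$ functions. $I_h$ is nodal $\mathbb{P}_1$ interpolation, $(f,g)_h=\int_\Omega I_h(fg)\,d\boldsymbol x$, $(\cdot,\cdot)$ the $L^2$ product. $J(\phi)=(1-2\phi)\arcsin(\sqrt{1-\phi})+\sqrt{(1-\phi)\phi}+2\arcsin(\sqrt{1/2})\,\phi$ on $[0,1]$ (so $J''(\phi)=1/\sqrt{\phi(1-\phi)}$); $J_\varepsilon\in C^2(\mathbb{R})$ equals $J$ on $[\varepsilon,1-\varepsilon]$ and its second-order Taylor polynomial at $\varepsilon$ (resp. $1-\varepsilon$) for $\phi<\varepsilon$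 (resp. $\phi>1-\varepsilon$). For $\phi\in\Phi_h$, $M^J_\varepsilon(\phi)$ is the piecewise constant diagonal matrix whose $k$-th entry on $I$ is $\Big(\frac{\phi(\boldsymbol x_k)-\phi(\boldsymbol x_0)}{J_\varepsilon'(\phi(\boldsymbol x_k))-J_\varepsilon'(\phi(\boldsymbol x_0))}\Big)^2$ if $\phi(\boldsymbol x_k)\neq\phi(\boldsymbol x_0)$ and $\big(1/J_\varepsilon''(\phi(\boldsymbol x_0))\big)^2$ otherwise. J$_\varepsilon$-scheme: given $\phi^n\in\Phi_h$ (starting from $\phi^0\in\Phi_h$), find $(\phi^{n+1},\mu^{n+1})\in\Phi_h\times M_h$ such that for all $(\bar\phi,\bar\mu)\in\Phi_h\times M_h$: $\frac1{\Delta t}(\phi^{n+1}-\phi^n,\bar\mu)_h+(M^J_\varepsilon(\phi^{n+1})\nabla\mu^{n+1},\nabla\bar\mu)=0$ and $(\nabla\phi^{n+1},\nabla\bar\phi)+(F_c'(\phi^{n+1})+F_e'(\phi^n),\bar\phi)=(\mu^{n+1},\bar\phi)_h$. *)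

From HB Require Import structures.
From mathcomp Require Import all_boot all_order all_algebra.
From mathcomp Require Import all_classical all_reals all_analysis.
Set Implicit Arguments.
Unset Strict Implicit.
Unset Printing Implicit Defensive.
Import Order.TTheory GRing.Theory Num.Theory.
Import numFieldNormedType.Exports.
Local Open Scope classical_set_scope.
Local Open Scope ring_scope.

(* ---------- integral over the reference simplex ---------------------------
   S_d = { p in R^d | p_i >= 0, sum_i p_i <= 1 }, points encoded as nat -> R
   (only the coordinates 0..d-1 matter).  Lebesgue integral, computed by the
   iterated form  S_{d+1} = {(t, (1-t) y) | t in [0,1], y in S_d},
   Jacobian (1-t)^d. *)
Fixpoint refint {R : realType} (d : nat) (g : (nat -> R) -> R) : R :=
  match d with
  | 0 => g (fun _ => 0)
  | d'.+1 =>
      Rintegral (@lebesgue_measure R) `[0%R, 1%R]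
        (fun t => (1 - t) ^+ d' *
           refint d' (fun y => g (fun i => if i is i'.+1 then (1 - t) * y i' else t)))
  end.

(* A continuous piecewise P1
   function is given by its nodal values f : V -> R. *)
Section Mesh.
Variables (R : realType) (d : nat) (V K : finType).
Variable X : V -> 'I_d -> R.
Variable vtx : K -> 'I_d.+1 -> V.

Definition v0 (e : K) : V := vtx e ord0.
Definition vk (e : K) (k : 'I_d) : V := vtx e (lift ord0 k).

Definition structured : Prop :=
  forall (e : K) (k j : 'I_d), (X (vk e k) j == X (v0 e) j) = (j != k).

(* x_k - x_0 = hlen e k * (k-th unit vector) *)
Definition hlen (e : K) (k : 'I_d) : R := X (vk e k) k - X (v0 e) k.

(* |det| of the affine map from the reference simplex onto element e *)
Definition jac (e : K) : R := \prod_(k < d) `|hlen e k|.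

(* value of the P1 function (nodal values f) on element e at the point
   x = x_0 + sum_k p_k (x_k - x_0), p in the reference simplex;
   for f = g evaluated at the nodes this is the nodal interpolant I_h g *)
Definition loc (f : V -> R) (e : K) (p : nat -> R) : R :=
  f (v0 e) + \sum_(k < d) p k * (f (vk e k) - f (v0 e)).

(* integral over Omega (= union of the elements) of a function given, on each
   element e, in reference coordinates *)
Definition intOmega (g : K -> (nat -> R) -> R) : R :=
  \sum_(e : K) jac e * refint d (g e).

Definition grad (f : V -> R) (e : K) (k : 'I_d) : R :=
  (f (vk e k) - f (v0 e)) / hlen e k.

Definition intIh (F : V -> R) : R := intOmega (loc F).

Definition lumped (f g : V -> R) : R := intIh (fun v => f v * g v).

Definition gradprod (f g : V -> R) : R :=
  intOmega (fun e _ => \sum_(k < d) grad f e k * grad g e k).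

End Mesh.

Definition Fpot {R : realType} (eta x : R) : R := (x ^+ 2 * (x - 1) ^+ 2) / (4 * eta ^+ 2).
Definition Fc' {R : realType} (eta x : R) : R :=
  (4 * x ^+ 3 - 6 * x ^+ 2 + 3 * x) / (4 * eta ^+ 2).
Definition Fe' {R : realType} (eta x : R) : R := - x / (4 * eta ^+ 2).

Definition Jfun {R : realType} (x : R) : R :=
  (1 - 2 * x) * asin (Num.sqrt (1 - x)) + Num.sqrt ((1 - x) * x)
  + 2 * asin (Num.sqrt (1 / 2)) * x.

Definition taylor2 {R : realType} (a x : R) : R :=
  Jfun a + derive1 Jfun a * (x - a) + derive1n 2 Jfun a / 2 * (x - a) ^+ 2.

Definition Jeps {R : realType} (eps x : R) : R :=
  if x < eps then taylor2 eps x
  else if 1 - eps < x then taylor2 (1 - eps) x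
  else Jfun x.

Definition Jeps' {R : realType} (eps : R) : R -> R := derive1 (Jeps eps).
Definition Jeps'' {R : realType} (eps : R) : R -> R := derive1n 2 (Jeps eps).

Section Scheme.
Variables (R : realType) (d : nat) (V K : finType).
Variable X : V -> 'I_d -> R.
Variable vtx : K -> 'I_d.+1 -> V.

Definition MJ (eps : R) (phi : V -> R) (e : K) (k : 'I_d) : R :=
  let a := phi (v0 vtx e) in
  let b := phi (vk vtx e k) in
  if b != a then ((b - a) / (Jeps' eps b - Jeps' eps a)) ^+ 2
  else ((Jeps'' eps a)^-1) ^+ 2.

Definition Mgradprod (eps : R) (phi mu nu : V -> R) : R :=
  intOmega X vtx (fun e _ => \sum_(k < d) MJ eps phi e k * grad X vtx mu e k * grad X vtx nu e k).

Definition energy (eta : R) (phi : V -> R) : R :=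
  intOmega X vtx (fun e p => (\sum_(k < d) grad X vtx phi e k ^+ 2) / 2
                             + Fpot eta (loc vtx phi e p)).

Definition scheme_step (eta eps dt : R) (phin phi1 mu1 : V -> R) : Prop :=
  (forall mub : V -> R,
      lumped X vtx (fun v => phi1 v - phin v) mub / dt
      + Mgradprod eps phi1 mu1 mub = 0) /\
  (forall phib : V -> R,
      gradprod X vtx phi1 phib
      + intOmega X vtx (fun e p => (Fc' eta (loc vtx phi1 e p) + Fe' eta (loc vtx phin e p))
                                   * loc vtx phib e p)
      = lumped X vtx mu1 phib).

Definition intIhJ (eps : R) (phi : V -> R) : R :=
  intIh X vtx (fun v => Jeps eps (phi v)).

End Scheme.

(* Testing the first equation of the scheme with [Jeps' eps phi1] and using
   the convexity of [Jeps eps], the time difference of the integral of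
   [I_h Jeps(phi)] is bounded by [-(M grad mu, grad I_h Jeps'(phi1))].  On a
   structured mesh every gradient component is a difference quotient along an
   edge, so the choice of [MJ] gives [MJ |grad I_h Jeps'(phi1)|^2 <= |grad phi1|^2]
   on each element, and Young's inequality yields the first estimate.  The
   convex-concave splitting of F makes the scheme energy stable,
   [E(phi1) + dt (M grad mu, grad mu) <= E(phin)], hence
   [|grad phi^n|^2 <= 2 E(phi^0)]; adding the two estimates and summing over
   the steps gives the bound with [C1 = J0 + E0] and [C2 = 2 E0].  All
   integrands are polynomials on the reference simplex, on which the iterated
   Lebesgue integral [refint] is linear and monotone. *)

From HB Require Import structures.
From mathcomp Require Import all_boot all_order all_algebra.
From mathcomp Require Import all_classical all_reals all_analysis.
From mathcomp Require Import ring lra.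
Import Order.TTheory GRing.Theory Num.Theory.
Import numFieldNormedType.Exports.
Local Open Scope ring_scope.

Section SimplexIntegral.
Context {R : realType}.

Local Notation Rint01 := (Rintegral (@lebesgue_measure R) `[0%R, 1%R]).

Fixpoint monomial (m : seq nat) (p : nat -> R) : R :=
  if m is a :: m' then p 0%N ^+ a * monomial m' (fun i => p i.+1) else 1.

(* a polynomial in the coordinates p_0, p_1, ..., as a list of pairs
   (coefficient, exponent list) *)
Definition eval_terms (L : seq (R * seq nat)) (p : nat -> R) : R :=
  \sum_(x <- L) x.1 * monomial x.2 p.

Definition polynomial_fun (g : (nat -> R) -> R) : Prop :=
  exists L, forall p, g p = eval_terms L p.

Definition simplex_lift (t : R) (y : nat -> R) : nat -> R :=
  fun i => if i is i'.+1 then (1 - t) * y i' else t.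

Definition in_simplex (d : nat) (p : nat -> R) : Prop :=
  (forall k, (k < d)%N -> 0 <= p k) /\ \sum_(k < d) p k <= 1.

Lemma monomial_scale m c y : monomial m (fun i => c * y i) = c ^+ sumn m * monomial m y.
Proof.
elim: m y => [|a m IH] y /=; first by rewrite expr0 mulr1.
by rewrite (IH (fun i => y i.+1)) exprMn exprD; ring.
Qed.

Lemma monomial_lift m t y : monomial m (simplex_lift t y) =
  t ^+ head 0%N m * ((1 - t) ^+ sumn (behead m) * monomial (behead m) y).
Proof.
by case: m => [|a m] /=; rewrite ?expr0 ?mulr1 // (monomial_scale m (1 - t) y).
Qed.

Definition lift_terms (t : R) (L : seq (R * seq nat)) :=
  [seq (x.1 * (t ^+ head 0%N x.2 * (1 - t) ^+ sumn (behead x.2)), behead x.2) | x <- L].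

Lemma eval_terms_lift L t y : eval_terms L (simplex_lift t y) = eval_terms (lift_terms t L) y.
Proof.
rewrite /eval_terms /lift_terms big_map; apply: eq_bigr => x _ /=.
by rewrite monomial_lift; ring.
Qed.

Lemma in_simplex_lift d t y : 0 <= t <= 1 -> in_simplex d y -> in_simplex d.+1 (simplex_lift t y).
Proof.
move=> /andP[t0 t1] [y0 ys]; split.
  by case=> [|k] //= /y0 yk; apply: mulr_ge0 => //; lra.
rewrite big_ord_recl /= -mulr_sumr.
have : (1 - t) * \sum_(i < d) y i <= (1 - t) * 1 by apply: ler_wpM2l => //; lra.
lra.
Qed.

Lemma integrable01_horner (P : {poly R}) :
  (@lebesgue_measure R).-integrable `[0%R, 1%R] (EFin \o horner P).
Proof.
apply: continuous_compact_integrable; first exact: segment_compact.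
by apply: continuous_subspaceT; exact: continuous_horner.
Qed.

Lemma Rintegral01_horner_sum (I : Type) (r : seq I) (P : I -> {poly R}) :
  Rint01 (fun t => \sum_(x <- r) (P x).[t]) = \sum_(x <- r) Rint01 (horner (P x)).
Proof.
elim: r => [|x r IH].
  rewrite big_nil (_ : (fun t => _) = fun=> 0); last by apply: funext => t; rewrite big_nil.
  by rewrite Rintegral_cst ?mul0r //; exact: measurable_itv.
rewrite big_cons -IH -RintegralD //; first by congr Rintegral; apply: funext => t; rewrite big_cons.
- exact: integrable01_horner.
- rewrite (_ : (fun t => _) = horner (\sum_(x <- r) P x)); first exact: integrable01_horner.
  by apply: funext => t; rewrite horner_sum.
Qed.

Lemma eq_refint {d : nat} {g h : (nat -> R) -> R} : g =1 h -> refint d g = refint d h.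
Proof. by move=> /funext ->. Qed.

Definition refint_linear_on_terms d : Prop :=
  forall L, refint d (eval_terms L) = \sum_(x <- L) x.1 * refint d (monomial x.2).

Definition lift_poly d (L : seq (R * seq nat)) : {poly R} :=
  \sum_(x <- L) (x.1 * refint d (monomial (behead x.2))) *:
     ((1 - 'X) ^+ d * ('X ^+ head 0%N x.2 * (1 - 'X) ^+ sumn (behead x.2))).

Lemma lift_polyE d L t : refint_linear_on_terms d ->
  (lift_poly d L).[t] = (1 - t) ^+ d * refint d (fun y => eval_terms L (simplex_lift t y)).
Proof.
move=> lin; rewrite (eq_refint (eval_terms_lift L t)) lin /lift_terms big_map.
rewrite horner_sum mulr_sumr; apply: eq_bigr => x _ /=.
by rewrite hornerZ !(hornerM, hornerD, hornerN, horner_exp, hornerX, hornerC); ring.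
Qed.

Lemma refintS_terms d L : refint_linear_on_terms d ->
  refint d.+1 (eval_terms L) = Rint01 (horner (lift_poly d L)).
Proof. by move=> lin; congr Rintegral; apply: funext => t; rewrite lift_polyE. Qed.

Lemma refint_terms d : refint_linear_on_terms d.
Proof.
elim: d => [//|d IH] L; rewrite refintS_terms //.
rewrite (_ : horner _ = fun t => \sum_(x <- L) (lift_poly d [:: x]).[t]); last first.
  by apply: funext => t; rewrite /lift_poly horner_sum; apply: eq_bigr => x _; rewrite big_seq1.
rewrite Rintegral01_horner_sum; apply: eq_bigr => x _.
have -> : refint d.+1 (monomial x.2) = refint d.+1 (eval_terms [:: (1, x.2)]).
  by apply: eq_refint => p; rewrite /eval_terms big_seq1 mul1r.
rewrite refintS_terms // /lift_poly !big_seq1 /=.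
rewrite (_ : horner _ = fun t => x.1 * (refint d (monomial (behead x.2)) *: ((1 - 'X) ^+ d *
    ('X ^+ head 0%N x.2 * (1 - 'X) ^+ sumn (behead x.2)))).[t]); last first.
  by apply: funext => t; rewrite !hornerZ; ring.
by rewrite mul1r RintegralZl //; exact: integrable01_horner.
Qed.

Lemma le_refint_terms d L1 L2 :
  (forall p, in_simplex d p -> eval_terms L1 p <= eval_terms L2 p) ->
  refint d (eval_terms L1) <= refint d (eval_terms L2).
Proof.
elim: d L1 L2 => [|d IH] L1 L2 le12.
  by apply: le12; split => //; rewrite big_ord0 ler01.
rewrite !refintS_terms; try exact: refint_terms.
apply: le_Rintegral; try exact: integrable01_horner; first exact: measurable_itv.
move=> t; rewrite /= in_itv /= => t01.
change ((lift_poly d L1).[t] <= (lift_poly d L2).[t]).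
rewrite !lift_polyE; try exact: refint_terms.
apply: ler_wpM2l; first by apply: exprn_ge0; case/andP: t01 => _; lra.
rewrite !(eq_refint (eval_terms_lift _ t)); apply: IH => y y_in.
by rewrite -!eval_terms_lift; apply: le12; exact: in_simplex_lift.
Qed.

Fixpoint exponents_add (m1 m2 : seq nat) : seq nat :=
  match m1, m2 with
  | [::], _ => m2
  | _, [::] => m1
  | a :: r, b :: s => (a + b)%N :: exponents_add r s
  end.

Lemma monomialD m1 m2 p :
  monomial (exponents_add m1 m2) p = monomial m1 p * monomial m2 p.
Proof.
elim: m1 m2 p => [|a m1 IH] [|b m2] p /=; rewrite ?mul1r ?mulr1 //.
by rewrite IH exprD; ring.
Qed.

Lemma monomial_coord k p : monomial (rcons (nseq k 0%N) 1%N) p = p k.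
Proof.
by elim: k p => [|k IH] p /=; rewrite ?IH ?expr0 ?mul1r // expr1 mulr1.
Qed.

Lemma polynomial_fun_cst c : polynomial_fun (fun _ => c).
Proof. by exists [:: (c, [::])] => p; rewrite /eval_terms big_seq1 mulr1. Qed.

Lemma polynomial_fun_coord k : polynomial_fun (fun p => p k).
Proof.
exists [:: (1, rcons (nseq k 0%N) 1%N)] => p.
by rewrite /eval_terms big_seq1 monomial_coord mul1r.
Qed.

Lemma polynomial_funD g h : polynomial_fun g -> polynomial_fun h ->
  polynomial_fun (fun p => g p + h p).
Proof.
by move=> [L1 gE] [L2 hE]; exists (L1 ++ L2) => p; rewrite /eval_terms big_cat gE hE.
Qed.

Lemma polynomial_funN g : polynomial_fun g -> polynomial_fun (fun p => - g p).
Proof.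
move=> [L gE]; exists [seq (- x.1, x.2) | x <- L] => p.
by rewrite /eval_terms big_map gE -sumrN; apply: eq_bigr => x _; rewrite mulNr.
Qed.

Lemma polynomial_funB g h : polynomial_fun g -> polynomial_fun h ->
  polynomial_fun (fun p => g p - h p).
Proof. by move=> pg ph; apply: polynomial_funD => //; exact: polynomial_funN. Qed.

Lemma polynomial_funM g h : polynomial_fun g -> polynomial_fun h ->
  polynomial_fun (fun p => g p * h p).
Proof.
move=> [L1 gE] [L2 hE].
exists [seq (x.1 * y.1, exponents_add x.2 y.2) | x <- L1, y <- L2] => p.
rewrite /eval_terms big_allpairs_dep gE hE mulr_suml; apply: eq_bigr => x _.
by rewrite mulr_sumr; apply: eq_bigr => y _ /=; rewrite monomialD; ring.
Qed.

Lemma polynomial_funX g n : polynomial_fun g -> polynomial_fun (fun p => g p ^+ n).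
Proof.
move=> pg; elim: n => [|n IH]; first exact: polynomial_fun_cst.
by under eq_fun do rewrite exprS; exact: polynomial_funM.
Qed.

Lemma polynomial_fun_sum (I : Type) (r : seq I) (g : I -> (nat -> R) -> R) :
  (forall i, polynomial_fun (g i)) -> polynomial_fun (fun p => \sum_(i <- r) g i p).
Proof.
move=> pg; elim: r => [|i r IH].
  by under eq_fun do rewrite big_nil; exact: polynomial_fun_cst.
by under eq_fun do rewrite big_cons; exact: polynomial_funD.
Qed.

Lemma refint0 d : refint d (fun _ : nat -> R => 0) = 0.
Proof.
rewrite (@eq_refint _ _ (eval_terms [::])) ?refint_terms ?big_nil //.
by move=> p; rewrite /eval_terms big_nil.
Qed.

Lemma refintD d g h : polynomial_fun g -> polynomial_fun h ->
  refint d (fun p => g p + h p) = refint d g + refint d h.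
Proof.
move=> [L1 gE] [L2 hE].
rewrite (eq_refint gE) (eq_refint hE) (@eq_refint _ _ (eval_terms (L1 ++ L2))).
  by rewrite !refint_terms big_cat.
by move=> p; rewrite gE hE /eval_terms big_cat.
Qed.

Lemma refintZ d c g : polynomial_fun g -> refint d (fun p => c * g p) = c * refint d g.
Proof.
move=> [L gE]; rewrite (eq_refint gE).
rewrite (@eq_refint _ _ (eval_terms [seq (c * x.1, x.2) | x <- L])); last first.
  by move=> p; rewrite gE /eval_terms big_map mulr_sumr; apply: eq_bigr => x _ /=; ring.
by rewrite !refint_terms big_map mulr_sumr; apply: eq_bigr => x _ /=; ring.
Qed.

Lemma le_refint d g h : polynomial_fun g -> polynomial_fun h ->
  (forall p, in_simplex d p -> g p <= h p) -> refint d g <= refint d h.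
Proof.
move=> [L1 gE] [L2 hE] le_gh; rewrite (eq_refint gE) (eq_refint hE).
by apply: le_refint_terms => p p_in; rewrite -gE -hE; exact: le_gh.
Qed.

End SimplexIntegral.

Section DerivativeFacts.
Context {R : realType}.
Local Open Scope classical_set_scope.

Lemma is_derive_glue (f g k : R -> R) (a L δ δ' : R) : 0 < δ -> 0 < δ' ->
  (forall x, a - δ < x <= a -> f x = g x) ->
  (forall x, a <= x < a + δ' -> f x = k x) ->
  is_derive a 1 g L -> is_derive a 1 k L -> is_derive a 1 f L.
Proof.
move=> δ0 δ'0 fg fk [dg gL] [dk kL].
have cg : (fun h => h^-1 *: ((g \o shift a) (h *: 1) - g a)) @ 0^' --> L.
  by rewrite -gL; exact: dg.
have ck : (fun h => h^-1 *: ((k \o shift a) (h *: 1) - k a)) @ 0^' --> L.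
  by rewrite -kL; exact: dk.
have fa : f a = g a by apply: fg; rewrite lexx andbT; lra.
have fa' : f a = k a by apply: fk; rewrite lexx /=; lra.
have cf : (fun h => h^-1 *: ((f \o shift a) (h *: 1) - f a)) @ 0^' --> L.
  apply/cvgrPdist_lt => e e0.
  have /cvgrPdist_lt/(_ e e0) Ng := cg.
  have /cvgrPdist_lt/(_ e e0) Nk := ck.
  near=> h.
  have hδ : `|h| < δ by near: h; exact: dnbhs0_lt.
  have hδ' : `|h| < δ' by near: h; exact: dnbhs0_lt.
  have [h_le0|h_gt0] := lerP h 0.
  - have -> : (f \o shift a) h%:A = (g \o shift a) h%:A.
      rewrite /= /GRing.scale /= mulr1; apply: fg.
      by move: hδ; rewrite ler0_norm //; lra.
    by rewrite fa; near: h; exact: Ng.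
  - have -> : (f \o shift a) h%:A = (k \o shift a) h%:A.
      rewrite /= /GRing.scale /= mulr1; apply: fk.
      by move: hδ'; rewrite gtr0_norm //; lra.
    by rewrite fa'; near: h; exact: Nk.
by apply: DeriveDef; [exact: cvgP cf | exact: cvg_lim cf].
Unshelve. all: by end_near.
Qed.

Lemma is_derive_ge0_ndecr (f df : R -> R) (a b : R) :
  (forall x, a < x < b -> is_derive x 1 f (df x)) ->
  (forall x, a < x < b -> 0 <= df x) ->
  forall x y, a < x -> x <= y -> y < b -> f x <= f y.
Proof.
move=> fD df_ge0 x y ax xy yb.
have fD' z : z \in `[x, y]%R -> is_derive z 1 f (df z).
  by rewrite in_itv /= => /andP[xz zy]; apply: fD; lra.
have [c] := MVT_segment xy (fun z zI => fD' z (subset_itv_oo_cc zI))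
  (derivable_within_continuous (fun z zI => @ex_derive _ _ _ _ _ _ _ (fD' z zI))).
rewrite in_itv /= => /andP[xc cy] fE.
have : 0 <= df c * (y - x) by apply: mulr_ge0; [apply: df_ge0; lra | lra].
lra.
Qed.

Lemma le_tangent_ndecr_derive (f df : R -> R) (a b : R) :
  (forall x : R, is_derive x 1 f (df x)) -> {homo df : x y / x <= y} ->
  f b - f a <= df b * (b - a).
Proof.
move=> fD df_mono.
have fC u v : {within `[u, v], continuous f}%classic.
  by apply: derivable_within_continuous => z _; exact: @ex_derive _ _ _ _ _ _ _ (fD z).
have [ab|ba|->] := ltgtP a b; last by rewrite !subrr mulr0.
- have [c] := MVT ab (fun z _ => fD z) (fC a b).
  rewrite in_itv /= => /andP[ac cb] ->.
  by apply: ler_wpM2r; [lra | apply: df_mono; lra].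
- have [c] := MVT ba (fun z _ => fD z) (fC b a).
  rewrite in_itv /= => /andP[bc ca] fE.
  have : df b <= df c by apply: df_mono; lra.
  have : 0 < a - b by lra.
  nra.
Qed.

End DerivativeFacts.

Section JCalculus.
Context {R : realType}.

Definition Jfun' (x : R) : R :=
  2 * asin (Num.sqrt (1 / 2)) - 2 * asin (Num.sqrt (1 - x)).

Definition Jfun'' (x : R) : R := (Num.sqrt x * Num.sqrt (1 - x))^-1.

Lemma Jfun''_gt0 (x : R) : 0 < x < 1 -> 0 < Jfun'' x.
Proof. by move=> /andP[x0 x1]; rewrite invr_gt0 mulr_gt0 // sqrtr_gt0; lra. Qed.

Lemma is_derive_onem (x : R) : is_derive x 1 (fun y : R => 1 - y) (-1).
Proof.
have D : is_derive x 1 (cst (1 : R) - id) (0 - 1) by apply: is_deriveB.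
by rewrite sub0r in D.
Qed.

Lemma is_derive_asin_sqrt_onem (x : R) : 0 < x < 1 ->
  is_derive x 1 (fun y => asin (Num.sqrt (1 - y))) (- (2 * (Num.sqrt x * Num.sqrt (1 - x)))^-1).
Proof.
move=> /andP[x0 x1].
have sx : 0 < Num.sqrt x by rewrite sqrtr_gt0.
have s1x : 0 < Num.sqrt (1 - x) by rewrite sqrtr_gt0; lra.
have s1x_lt1 : Num.sqrt (1 - x) < 1 by rewrite -{2}sqrtr1 ltr_sqrt; lra.
have D : is_derive x 1 (asin \o (fun y => Num.sqrt (1 - y)))
    ((Num.sqrt (1 - Num.sqrt (1 - x) ^+ 2))^-1 * ((2 * Num.sqrt (1 - x))^-1 * -1)).
  apply: is_derive1_comp; last by apply: is_derive1_comp; [apply: is_derive1_sqrt; lra | exact: is_derive_onem].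
  by apply: is_derive1_asin; lra.
apply: is_derive_eq D _.
rewrite sqr_sqrtr; last lra.
rewrite (_ : 1 - (1 - x) = x); last by ring.
by field; rewrite !gt_eqF.
Qed.

Lemma is_derive_Jfun (x : R) : 0 < x < 1 -> is_derive x 1 (@Jfun R) (Jfun' x).
Proof.
move=> /[dup] x01 /andP[x0 x1].
have sx : 0 < Num.sqrt x by rewrite sqrtr_gt0.
have s1x : 0 < Num.sqrt (1 - x) by rewrite sqrtr_gt0; lra.
have DA := is_derive_asin_sqrt_onem x x01.
have DW : is_derive x 1 (Num.sqrt \o ((fun y : R => 1 - y) * id))
    ((2 * Num.sqrt ((1 - x) * x))^-1 * ((1 - x) *: 1 + x *: -1)).
  apply: is_derive1_comp; last exact: is_deriveM (is_derive_onem x) _.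
  by apply: is_derive1_sqrt; rewrite /= mulr_gt0 //; lra.
have DL (a b : R) : is_derive x 1 (fun y => a + b * y) b.
  have D : is_derive x 1 (cst a + b \*: id) (0 + b *: 1) by apply: is_deriveD.
  by rewrite add0r /GRing.scale /= mulr1 in D.
have D := is_deriveD (is_deriveD (is_deriveM (DL 1 (-2)) DA) DW) (DL 0 (2 * asin (Num.sqrt (1 / 2)))).
have -> : @Jfun R = (fun y => 1 + -2 * y) * (fun y => asin (Num.sqrt (1 - y)))
    + (Num.sqrt \o ((fun y => 1 - y) * id)) + (fun y => 0 + 2 * asin (Num.sqrt (1 / 2)) * y).
  by apply: funext => y; rewrite /Jfun /=; congr (_ * _ + _ + _); rewrite ?mulNr ?add0r.
apply: is_derive_eq D _.
rewrite sqrtrM; last lra.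
rewrite /Jfun' /GRing.scale /=.
by field; rewrite !gt_eqF.
Qed.

Lemma is_derive_Jfun' (x : R) : 0 < x < 1 -> is_derive x 1 Jfun' (Jfun'' x).
Proof.
move=> /[dup] x01 /andP[x0 x1].
have sx : 0 < Num.sqrt x by rewrite sqrtr_gt0.
have s1x : 0 < Num.sqrt (1 - x) by rewrite sqrtr_gt0; lra.
have D := is_deriveB (is_derive_cst (2 * asin (Num.sqrt (1 / 2))) x 1)
  (is_deriveZ 2 (is_derive_asin_sqrt_onem x x01)).
apply: is_derive_eq D _.
by rewrite /Jfun'' /GRing.scale /=; field; rewrite !gt_eqF.
Qed.

Lemma derive1_Jfun (x : R) : 0 < x < 1 -> derive1 (@Jfun R) x = Jfun' x.
Proof. by move=> /is_derive_Jfun [_ E]; rewrite derive1E. Qed.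

Lemma derive2_Jfun (x : R) : 0 < x < 1 -> derive1n 2 (@Jfun R) x = Jfun'' x.
Proof.
move=> x01; rewrite /derive1n /= derive1E.
have -> : 'D_1 (derive1 (@Jfun R)) x = 'D_1 Jfun' x.
  apply: near_eq_derive.
  have : x \in `]0, 1[%R by rewrite in_itv /=.
  move=> /near_in_itvoo xI; near=> y.
  apply: derive1_Jfun.
  have : y \in `]0, 1[%R by near: y.
  by rewrite in_itv.
by have [_ ->] := is_derive_Jfun' x x01.
Unshelve. all: by end_near.
Qed.

Definition Jtaylor (a y : R) : R :=
  Jfun a + Jfun' a * (y - a) + Jfun'' a / 2 * (y - a) ^+ 2.

Lemma JtaylorE (a : R) : Jtaylor a a = Jfun a.
Proof. by rewrite /Jtaylor subrr expr0n /= !mulr0 !addr0. Qed.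

Lemma is_derive_Jtaylor (a x : R) : is_derive x 1 (Jtaylor a) (Jfun' a + Jfun'' a * (x - a)).
Proof.
have Dl : is_derive x 1 (fun y : R => y - a) 1.
  have D : is_derive x 1 (id - cst a) (1 - 0) by apply: is_deriveB.
  by rewrite subr0 in D.
have D := is_deriveD (is_deriveD (is_derive_cst (Jfun a) x 1) (is_deriveZ (Jfun' a) Dl))
  (is_deriveZ (Jfun'' a / 2) (is_deriveX 2 Dl)).
have -> : Jtaylor a = cst (Jfun a) + Jfun' a \*: (fun y => y - a)
    + (Jfun'' a / 2) \*: (fun y => y - a) ^+ 2 by [].
apply: is_derive_eq D _.
by rewrite /GRing.scale /=; field.
Qed.

Lemma taylor2E (a y : R) : 0 < a < 1 -> taylor2 a y = Jtaylor a y.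
Proof. by move=> a01; rewrite /taylor2 derive1_Jfun // derive2_Jfun. Qed.

End JCalculus.

Section JepsConvexity.
Context {R : realType}.
Variable e : R.
Hypotheses (e_gt0 : 0 < e) (e_lt_onem : e < 1 - e).

(* [lra] does not use section hypotheses, hence the local copies below *)
Let e_in01 : 0 < e < 1.
Proof. by have e0 := e_gt0; have e1 := e_lt_onem; apply/andP; split; lra. Qed.

Let onem_e_in01 : 0 < 1 - e < 1.
Proof. by have e0 := e_gt0; have e1 := e_lt_onem; apply/andP; split; lra. Qed.

Lemma JepsE_left (y : R) : y <= e -> Jeps e y = Jtaylor e y.
Proof.
rewrite le_eqVlt => /predU1P[->|ye]; last by rewrite /Jeps ye taylor2E.
by rewrite /Jeps ltxx ltNge (ltW e_lt_onem) JtaylorE.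
Qed.

Lemma JepsE_mid (y : R) : e <= y <= 1 - e -> Jeps e y = Jfun y.
Proof. by case/andP=> ey ye; rewrite /Jeps ltNge ey ltNge ye. Qed.

Lemma JepsE_right (y : R) : 1 - e <= y -> Jeps e y = Jtaylor (1 - e) y.
Proof.
move=> ey; have e1 := e_lt_onem.
have ye : (y < e) = false by apply/negbTE; rewrite -leNgt; lra.
rewrite /Jeps ye; move: ey; rewrite le_eqVlt => /predU1P[<-|ey].
  by rewrite ltxx JtaylorE.
by rewrite ey taylor2E.
Qed.

Definition dJeps (x : R) : R :=
  if x < e then Jfun' e + Jfun'' e * (x - e)
  else if 1 - e < x then Jfun' (1 - e) + Jfun'' (1 - e) * (x - (1 - e))
  else Jfun' x.

Lemma is_derive_Jeps (x : R) : is_derive x 1 (Jeps e) (dJeps x).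
Proof.
have e0 := e_gt0; have e1 := e_lt_onem.
have DJtaylor (a : R) : is_derive a 1 (Jtaylor a) (Jfun' a).
  by apply: is_derive_eq (is_derive_Jtaylor a a) _; rewrite subrr mulr0 addr0.
rewrite /dJeps; have [xe|ex|xE] := ltgtP x e.
- apply: (@is_derive_glue _ _ (Jtaylor e) (Jtaylor e) _ _ (e - x) (e - x));
    rewrite ?subr_gt0 //; try exact: is_derive_Jtaylor;
    by move=> y /andP[? ?]; apply: JepsE_left; lra.
- have [xe'|ex'|xE] := ltgtP x (1 - e).
  + apply: (@is_derive_glue _ _ Jfun Jfun _ _ (x - e) (1 - e - x));
      rewrite ?subr_gt0 //; try (by apply: is_derive_Jfun; lra);
      by move=> y /andP[? ?]; apply: JepsE_mid; lra.
  + apply: (@is_derive_glue _ _ (Jtaylor (1 - e)) (Jtaylor (1 - e)) _ _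
      (x - (1 - e)) (x - (1 - e))); rewrite ?subr_gt0 //; try exact: is_derive_Jtaylor;
      by move=> y /andP[? ?]; apply: JepsE_right; lra.
  + subst x; apply: (@is_derive_glue _ _ Jfun (Jtaylor (1 - e)) _ _ (1 - 2 * e) 1) => //; try lra.
    * by move=> y /andP[? ?]; apply: JepsE_mid; lra.
    * by move=> y /andP[? ?]; apply: JepsE_right.
    * by apply: is_derive_Jfun; lra.
- subst x; rewrite ltNge (ltW e_lt_onem) /=.
  apply: (@is_derive_glue _ _ (Jtaylor e) Jfun _ _ 1 (1 - 2 * e)) => //; try lra.
  + by move=> y /andP[? ?]; apply: JepsE_left.
  + by move=> y /andP[? ?]; apply: JepsE_mid; lra.
  + by apply: is_derive_Jfun; lra.
Qed.

Lemma Jfun'_ndecr (x y : R) : 0 < x -> x <= y -> y < 1 -> Jfun' x <= Jfun' y.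
Proof.
apply: (@is_derive_ge0_ndecr _ _ Jfun'') => z z01.
  exact: is_derive_Jfun'.
exact/ltW/Jfun''_gt0.
Qed.

Lemma dJeps_ndecr : {homo dJeps : x y / x <= y}.
Proof.
have e0 := e_gt0; have e1 := e_lt_onem.
have J''e := Jfun''_gt0 _ e_in01.
have J''1e := Jfun''_gt0 _ onem_e_in01.
have J'e : Jfun' e <= Jfun' (1 - e) by apply: Jfun'_ndecr; lra.
move=> x y xy; rewrite /dJeps.
case: ifP => xe; case: ifP => ye; try (case: ifP => x1e); try (case: ifP => y1e).
all: try (move/negbT: xe; rewrite -leNgt => xe).
all: try (move/negbT: ye; rewrite -leNgt => ye).
all: try (move/negbT: x1e; rewrite -leNgt => x1e).
all: try (move/negbT: y1e; rewrite -leNgt => y1e).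
all: try nra.
- have : Jfun' e <= Jfun' y by apply: Jfun'_ndecr; lra.
  nra.
- have : Jfun' x <= Jfun' (1 - e) by apply: Jfun'_ndecr; lra.
  nra.
- by apply: Jfun'_ndecr; lra.
Qed.

Lemma Jeps_tangent_le (a b : R) : Jeps e b - Jeps e a <= Jeps' e b * (b - a).
Proof.
have -> : Jeps' e b = dJeps b by rewrite /Jeps' derive1E; have [_ ->] := is_derive_Jeps b.
exact: le_tangent_ndecr_derive is_derive_Jeps dJeps_ndecr.
Qed.

End JepsConvexity.

Section MeshIntegrals.
Context {R : realType} {d : nat} {V K : finType}.
Variables (X : V -> 'I_d -> R) (vtx : K -> 'I_d.+1 -> V).

Lemma jac_ge0 (e : K) : 0 <= jac X vtx e.
Proof. by apply: prodr_ge0 => k _; exact: normr_ge0. Qed.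

Lemma polynomial_fun_loc (F : V -> R) (e : K) : polynomial_fun (loc vtx F e).
Proof.
apply: polynomial_funD; first exact: polynomial_fun_cst.
apply: polynomial_fun_sum => k; apply: polynomial_funM; first exact: polynomial_fun_coord.
exact: polynomial_fun_cst.
Qed.

Lemma intOmegaD (g h : K -> (nat -> R) -> R) :
  (forall e, polynomial_fun (g e)) -> (forall e, polynomial_fun (h e)) ->
  intOmega X vtx (fun e p => g e p + h e p) = intOmega X vtx g + intOmega X vtx h.
Proof.
move=> pg ph; rewrite /intOmega -big_split /=; apply: eq_bigr => e _.
by rewrite refintD // mulrDr.
Qed.

Lemma intOmegaZ (c : R) (g : K -> (nat -> R) -> R) : (forall e, polynomial_fun (g e)) ->
  intOmega X vtx (fun e p => c * g e p) = c * intOmega X vtx g.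
Proof.
move=> pg; rewrite /intOmega mulr_sumr; apply: eq_bigr => e _.
by rewrite refintZ // mulrCA.
Qed.

Lemma intOmegaB (g h : K -> (nat -> R) -> R) :
  (forall e, polynomial_fun (g e)) -> (forall e, polynomial_fun (h e)) ->
  intOmega X vtx (fun e p => g e p - h e p) = intOmega X vtx g - intOmega X vtx h.
Proof.
move=> pg ph; rewrite -mulN1r -intOmegaZ // -intOmegaD //.
  by congr intOmega; apply: funext => e; apply: funext => p; rewrite mulN1r.
by move=> e; apply: polynomial_funM => //; exact: polynomial_fun_cst.
Qed.

Lemma le_intOmega (g h : K -> (nat -> R) -> R) :
  (forall e, polynomial_fun (g e)) -> (forall e, polynomial_fun (h e)) ->
  (forall e p, in_simplex d p -> g e p <= h e p) -> intOmega X vtx g <= intOmega X vtx h.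
Proof.
move=> pg ph le_gh; apply: ler_sum => e _; apply: ler_wpM2l; first exact: jac_ge0.
by apply: le_refint => // p p_in; exact: le_gh.
Qed.

Lemma intOmega_ge0 (g : K -> (nat -> R) -> R) : (forall e, polynomial_fun (g e)) ->
  (forall e p, in_simplex d p -> 0 <= g e p) -> 0 <= intOmega X vtx g.
Proof.
move=> pg g_ge0; apply: sumr_ge0 => e _; apply: mulr_ge0; first exact: jac_ge0.
rewrite -(refint0 d); apply: le_refint => //; first exact: polynomial_fun_cst.
by move=> p p_in; exact: g_ge0.
Qed.

Lemma locB (F G : V -> R) e p :
  loc vtx (fun v => F v - G v) e p = loc vtx F e p - loc vtx G e p.
Proof.
rewrite /loc.
have -> : \sum_(k < d) p k * (F (vk vtx e k) - G (vk vtx e k) - (F (v0 vtx e) - G (v0 vtx e)))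
    = \sum_(k < d) p k * (F (vk vtx e k) - F (v0 vtx e))
      - \sum_(k < d) p k * (G (vk vtx e k) - G (v0 vtx e)).
  by rewrite -sumrB; apply: eq_bigr => k _; ring.
ring.
Qed.

Lemma gradB (F G : V -> R) e k :
  grad X vtx (fun v => F v - G v) e k = grad X vtx F e k - grad X vtx G e k.
Proof. by rewrite /grad; ring. Qed.

Lemma le_loc (F G : V -> R) e p : (forall v, F v <= G v) -> in_simplex d p ->
  loc vtx F e p <= loc vtx G e p.
Proof.
move=> le_FG [p_ge0 p_sum].
have locE (H : V -> R) : loc vtx H e p =
    (1 - \sum_(k < d) p k) * H (v0 vtx e) + \sum_(k < d) p k * H (vk vtx e k).
  rewrite /loc mulrBl mul1r mulr_suml addrAC -addrA -sumrB; congr (_ + _).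
  by apply: eq_bigr => k _; ring.
rewrite !locE; apply: lerD.
  by apply: ler_wpM2l; [rewrite subr_ge0 | exact: le_FG].
by apply: ler_sum => k _; apply: ler_wpM2l; [exact: p_ge0 | exact: le_FG].
Qed.

Lemma le_intIh (F G : V -> R) : (forall v, F v <= G v) -> intIh X vtx F <= intIh X vtx G.
Proof.
move=> le_FG; apply: le_intOmega => [e|e|e p]; try exact: polynomial_fun_loc.
exact: le_loc.
Qed.

Lemma intIhB (F G : V -> R) :
  intIh X vtx (fun v => F v - G v) = intIh X vtx F - intIh X vtx G.
Proof.
rewrite /intIh -intOmegaB => [|e|e]; try exact: polynomial_fun_loc.
by congr intOmega; apply: funext => e; apply: funext => p; rewrite locB.
Qed.

End MeshIntegrals.

Ltac polynomial_fun_tac := repeat first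
  [ apply: polynomial_fun_cst | apply: polynomial_fun_loc | apply: polynomial_funD
  | apply: polynomial_funB | apply: polynomial_funM | apply: polynomial_funX
  | apply: polynomial_funN ].

Section ElementaryInequalities.
Context {R : realType}.

Lemma sqr_div_mul_le (u w h : R) : (u / w) ^+ 2 * (w / h) ^+ 2 <= (u / h) ^+ 2.
Proof.
have [->|w0] := eqVneq w 0; last by rewrite -exprMn mulrA divfK.
by rewrite invr0 mulr0 expr0n /= mul0r; exact: sqr_ge0.
Qed.

(* weighted Young inequality, from [a^2 + a b + b^2 >= 0] *)
Lemma cross_term_le (M a b c : R) : 0 <= M -> M * b ^+ 2 <= c ^+ 2 ->
  - (M * a * b) <= M * a * a + c * c.
Proof.
move=> M_ge0 Mb_le.
have := mulr_ge0 M_ge0 (sqr_ge0 (a + b)); have := mulr_ge0 M_ge0 (sqr_ge0 a).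
nra.
Qed.

Lemma sum_half_sqr_sub_le (n : nat) (a b : 'I_n -> R) :
  (\sum_(k < n) a k ^+ 2) / 2 - (\sum_(k < n) b k ^+ 2) / 2 <= \sum_(k < n) a k * (a k - b k).
Proof.
rewrite -subr_ge0 !mulr_suml -!sumrB.
apply: sumr_ge0 => k _.
have -> : a k * (a k - b k) - (a k ^+ 2 / 2 - b k ^+ 2 / 2) = (a k - b k) ^+ 2 / 2 by field.
by rewrite divr_ge0 ?sqr_ge0.
Qed.

Lemma Fpot_ge0 (eta x : R) : 0 <= Fpot eta x.
Proof. by apply: divr_ge0; apply: mulr_ge0; rewrite ?sqr_ge0 ?ler0n. Qed.

(* [F_c] is convex and [F_e] concave *)
Lemma Fpot_splitting_le (eta x y : R) :
  Fpot eta x - Fpot eta y <= (Fc' eta x + Fe' eta y) * (x - y).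
Proof.
rewrite /Fpot /Fc' /Fe' -subr_ge0.
have c_ge0 : 0 <= (4 * eta ^+ 2)^-1 by rewrite invr_ge0 mulr_ge0 ?sqr_ge0 ?ler0n.
have -> : ((4 * x ^+ 3 - 6 * x ^+ 2 + 3 * x) / (4 * eta ^+ 2) + - y / (4 * eta ^+ 2)) * (x - y)
    - (x ^+ 2 * (x - 1) ^+ 2 / (4 * eta ^+ 2) - y ^+ 2 * (y - 1) ^+ 2 / (4 * eta ^+ 2))
  = (y - x) ^+ 2 * ((y + x - 1) ^+ 2 + x ^+ 2 + (x - 1) ^+ 2) * (4 * eta ^+ 2)^-1 by ring.
apply: mulr_ge0 => //; apply: mulr_ge0; first exact: sqr_ge0.
by rewrite !addr_ge0 ?sqr_ge0.
Qed.

End ElementaryInequalities.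

Section SchemeEstimates.
Context {R : realType} {d : nat} {V K : finType}.
Variables (X : V -> 'I_d -> R) (vtx : K -> 'I_d.+1 -> V).

Lemma MJ_ge0 (eps : R) (phi : V -> R) (e : K) (k : 'I_d) : 0 <= MJ vtx eps phi e k.
Proof. by rewrite /MJ; case: ifP => _; exact: sqr_ge0. Qed.

Lemma MJ_grad_Jeps'_le (eps : R) (phi : V -> R) (e : K) (k : 'I_d) :
  MJ vtx eps phi e k * grad X vtx (fun v => Jeps' eps (phi v)) e k ^+ 2
    <= grad X vtx phi e k ^+ 2.
Proof.
rewrite /MJ /grad; case: ifP => [_|/negbFE/eqP ->]; first exact: sqr_div_mul_le.
by rewrite !subrr !mul0r expr0n /= mulr0.
Qed.

Lemma Mgradprod_ge0 (eps : R) (phi mu : V -> R) : 0 <= Mgradprod X vtx eps phi mu mu.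
Proof.
apply: intOmega_ge0 => [e|e p _]; first exact: polynomial_fun_cst.
apply: sumr_ge0 => k _; rewrite -mulrA -expr2.
by apply: mulr_ge0; [exact: MJ_ge0 | exact: sqr_ge0].
Qed.

Lemma energy_ge0 (eta : R) (phi : V -> R) : 0 <= energy X vtx eta phi.
Proof.
apply: intOmega_ge0 => [e|e p _]; first by rewrite /Fpot; polynomial_fun_tac.
apply: addr_ge0; last exact: Fpot_ge0.
by apply: divr_ge0 => //; apply: sumr_ge0 => k _; exact: sqr_ge0.
Qed.

Lemma gradprod_le_energy (eta : R) (phi : V -> R) :
  gradprod X vtx phi phi <= 2 * energy X vtx eta phi.
Proof.
rewrite /energy -intOmegaZ; last by move=> e; rewrite /Fpot; polynomial_fun_tac.
apply: le_intOmega => [e|e|e p _]; try by rewrite /Fpot; polynomial_fun_tac.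
have := Fpot_ge0 eta (loc vtx phi e p).
under eq_bigr do rewrite -expr2.
move: (\sum_(k < d) _) => s; lra.
Qed.

Section OneStep.
Context {eta eps dt : R} {phin phi1 mu1 : V -> R}.
Hypotheses (dt_gt0 : 0 < dt) (step : scheme_step X vtx eta eps dt phin phi1 mu1).

(* test the first equation of the scheme with [Jeps' eps phi1]; the convexity
   of [Jeps eps] bounds the time difference, the definition of [MJ] the rest *)
Lemma discrete_entropy_estimate : 0 < eps -> eps < 1 - eps ->
  (intIhJ X vtx eps phi1 - intIhJ X vtx eps phin) / dt
    <= Mgradprod X vtx eps phi1 mu1 mu1 + gradprod X vtx phi1 phi1.
Proof.
move=> eps_gt0 eps_lt; have [step_mu _] := step.
pose Jphi1 v := Jeps' eps (phi1 v).
have time_le : intIhJ X vtx eps phi1 - intIhJ X vtx eps phin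
    <= lumped X vtx (fun v => phi1 v - phin v) Jphi1.
  rewrite /intIhJ -intIhB; apply: le_intIh => v.
  by rewrite mulrC; exact: Jeps_tangent_le.
have lumpedE : lumped X vtx (fun v => phi1 v - phin v) Jphi1 / dt
    = - Mgradprod X vtx eps phi1 mu1 Jphi1.
  by apply/eqP; rewrite -addr_eq0 step_mu.
have cross_le : - Mgradprod X vtx eps phi1 mu1 Jphi1
    <= Mgradprod X vtx eps phi1 mu1 mu1 + gradprod X vtx phi1 phi1.
  rewrite /Mgradprod /gradprod -intOmegaD => [|e|e]; try exact: polynomial_fun_cst.
  rewrite -mulN1r -intOmegaZ => [|e]; last exact: polynomial_fun_cst.
  apply: le_intOmega => [e|e|e p _]; try exact: polynomial_fun_cst.
  rewrite mulN1r -sumrN -big_split /=; apply: ler_sum => k _.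
  exact: cross_term_le (MJ_ge0 _ _ _ _) (MJ_grad_Jeps'_le _ _ _ _).
apply: le_trans cross_le; rewrite -lumpedE.
by apply: ler_wpM2r => //; rewrite invr_ge0 ltW.
Qed.

(* test the first equation with [mu1] and the second with [phi1 - phin] *)
Lemma energy_stability :
  energy X vtx eta phi1 + dt * Mgradprod X vtx eps phi1 mu1 mu1 <= energy X vtx eta phin.
Proof.
have [step_mu step_phi] := step.
pose dphi v := phi1 v - phin v.
have lumped_dphi : lumped X vtx mu1 dphi = - (dt * Mgradprod X vtx eps phi1 mu1 mu1).
  have : lumped X vtx dphi mu1 / dt = - Mgradprod X vtx eps phi1 mu1 mu1.
    by apply/eqP; rewrite -addr_eq0 step_mu.
  rewrite /lumped (_ : (fun v => mu1 v * dphi v) = fun v => dphi v * mu1 v).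
    by move/(congr1 ( *%R^~ dt)); rewrite divfK ?gt_eqF // => ->; ring.
  by apply: funext => v; rewrite mulrC.
suff : energy X vtx eta phi1 - energy X vtx eta phin <= lumped X vtx mu1 dphi.
  by rewrite lumped_dphi; lra.
have polyE e : polynomial_fun (fun p => (\sum_(k < d) grad X vtx phi1 e k ^+ 2) / 2
    + Fpot eta (loc vtx phi1 e p)) by rewrite /Fpot; polynomial_fun_tac.
have polyEn e : polynomial_fun (fun p => (\sum_(k < d) grad X vtx phin e k ^+ 2) / 2
    + Fpot eta (loc vtx phin e p)) by rewrite /Fpot; polynomial_fun_tac.
rewrite -(step_phi dphi) /energy -intOmegaB // /gradprod -intOmegaD => [|e|e]; last first.
- by rewrite /Fc' /Fe'; polynomial_fun_tac.
- exact: polynomial_fun_cst.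
apply: le_intOmega => [e|e|e p _]; try by rewrite /Fc' /Fe' /Fpot; polynomial_fun_tac.
rewrite opprD addrACA; apply: lerD; last by rewrite /dphi locB; exact: Fpot_splitting_le.
under [X in _ <= X]eq_bigr do rewrite gradB.
exact: sum_half_sqr_sub_le.
Qed.

Lemma entropy_energy_step : 0 < eps -> eps < 1 - eps ->
  intIhJ X vtx eps phi1 + energy X vtx eta phi1
    <= intIhJ X vtx eps phin + energy X vtx eta phin + dt * gradprod X vtx phi1 phi1.
Proof.
move=> eps_gt0 eps_lt.
have := discrete_entropy_estimate eps_gt0 eps_lt; rewrite ler_pdivrMr //.
have := energy_stability; lra.
Qed.

End OneStep.

Section Run.
Context {eta eps dt : R} {N : nat} {phi mu : nat -> V -> R}.
Hypotheses (dt_gt0 : 0 < dt)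
  (steps : forall n, (n < N)%N -> scheme_step X vtx eta eps dt (phi n) (phi n.+1) (mu n.+1)).

Lemma energy_nonincr m : (m <= N)%N -> energy X vtx eta (phi m) <= energy X vtx eta (phi 0%N).
Proof.
elim: m => [//|m IH] mN; apply: le_trans (IH (ltnW mN)).
have := energy_stability dt_gt0 (steps m mN).
have := mulr_ge0 (ltW dt_gt0) (Mgradprod_ge0 eps (phi m.+1) (mu m.+1)); lra.
Qed.

Lemma entropy_energy_growth : 0 < eps -> eps < 1 - eps -> forall m, (m <= N)%N ->
  intIhJ X vtx eps (phi m) + energy X vtx eta (phi m)
    <= intIhJ X vtx eps (phi 0%N) + energy X vtx eta (phi 0%N)
       + 2 * (m%:R * dt) * energy X vtx eta (phi 0%N).
Proof.
move=> eps_gt0 eps_lt; elim=> [|m IH] mN; first by rewrite mul0r mulr0 mul0r addr0.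
have := entropy_energy_step dt_gt0 (steps m mN) eps_gt0 eps_lt.
have : dt * gradprod X vtx (phi m.+1) (phi m.+1) <= dt * (2 * energy X vtx eta (phi 0%N)).
  apply: ler_wpM2l; first exact: ltW.
  apply: le_trans (gradprod_le_energy eta _) _.
  by apply: ler_wpM2l => //; exact: energy_nonincr.
have := IH (ltnW mN); rewrite -natr1; lra.
Qed.

End Run.

End SchemeEstimates.

Lemma half_lt_onem (R : realType) (eps : R) : eps < 1 / 2 -> eps < 1 - eps.
Proof. by rewrite ltr_pdivlMr //; lra. Qed.

Theorem lemma7 (R : realType) :
  (forall (d : nat) (V K : finType) (X : V -> 'I_d -> R) (vtx : K -> 'I_d.+1 -> V)
          (eta eps dt : R) (phin phi1 mu1 : V -> R),
      (1 <= d <= 3)%N -> structured X vtx ->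
      0 < eta -> 0 < eps < 1 / 2 -> 0 < dt ->
      scheme_step X vtx eta eps dt phin phi1 mu1 ->
      (intIhJ X vtx eps phi1 - intIhJ X vtx eps phin) / dt
        <= Mgradprod X vtx eps phi1 mu1 mu1 + gradprod X vtx phi1 phi1)
  /\
  (exists C1 C2 : R -> R -> R,
    forall (d : nat) (V K : finType) (X : V -> 'I_d -> R) (vtx : K -> 'I_d.+1 -> V)
           (eta eps T : R) (N : nat) (phi mu : nat -> V -> R),
      (1 <= d <= 3)%N -> structured X vtx ->
      0 < eta -> 0 < eps < 1 / 2 -> 0 < T -> (0 < N)%N ->
      (forall n, (n < N)%N ->
         scheme_step X vtx eta eps (T / N%:R) (phi n) (phi n.+1) (mu n.+1)) ->
      forall n, (n < N)%N ->
        intIhJ X vtx eps (phi n.+1)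
          <= C1 (energy X vtx eta (phi 0%N)) (intIhJ X vtx eps (phi 0%N))
             + C2 (energy X vtx eta (phi 0%N)) (intIhJ X vtx eps (phi 0%N)) * T).
Proof.
split=> [d V K X vtx eta eps dt phin phi1 mu1 _ _ _ /andP[eps_gt0 /half_lt_onem eps_lt] dt_gt0 step|].
  exact (discrete_entropy_estimate X vtx dt_gt0 step eps_gt0 eps_lt).
exists (fun E J => J + E), (fun E _ => 2 * E).
move=> d V K X vtx eta eps T N phi mu _ _ _ /andP[eps_gt0 /half_lt_onem eps_lt] T_gt0 N_gt0 steps n nN.
have dt_gt0 : 0 < T / N%:R by rewrite divr_gt0 // ltr0n.
have := entropy_energy_growth X vtx dt_gt0 steps eps_gt0 eps_lt n.+1 nN.
have time_le : n.+1%:R * (T / N%:R) <= T.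
  rewrite mulrCA; apply: ler_piMr; first exact: ltW.
  by rewrite ler_pdivrMr ?ltr0n // mul1r ler_nat.
have := ler_wpM2l (energy_ge0 X vtx eta (phi 0%N)) time_le.
have := energy_ge0 X vtx eta (phi n.+1).
lra.
Qed.
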